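(* Let $\min(p,q)\ge 2$ and let $M_0, M_1, M_2$ be three Minkowski patches of $\widetilde{\mathrm{Ein}}^{p,q}$ with $M_1 \neq \iota(M_2)$, such that for a stereographic projection $s : M_0\to\mathbb{R}^{p,q}$, both $s(M_0\cap M_1)$ and $s(M_0\cap M_2)$ are of the form $H_{w,\alpha}$ with $w\in\mathcal{C}\setminus\{0\}$, $\alpha\in\mathbb{R}$. If $M_0 \cap M_1$ and $M_0 \cap M_2$ are disjoint, then $\iota(M_0) \subset M_1 \cup M_2$.
   Context: $\widetilde{\mathrm{Ein}}^{p,q}\cong\mathbb{S}^p\times\mathbb{S}^q$ is the set of isotropic vectors of Euclidean norm 1 in $\mathbb{R}^{p+1,q+1}$, double covering $\mathrm{Ein}^{p,q}$ (isotropic lines) via $\pi_{\mathbf{X}}$; $\iota$ is the product of antipodal maps. Minkowski patches of $\widetilde{\mathrm{Ein}}^{p,q}$ are the connected components of $\pi_{\mathbf{X}}^{-1}(\{[u]:B(v,u)\neq0\})$, $v$ isotropic. A stereographic projection is a conformal diffeomorphism from a Minkowski patch onto $\mathbb{R}^{p,q}$. On $\mathbb{R}^{p,q}$ ($n=p+q$): $b(v,w) = -v_1w_1 - \cdots - v_pw_p + v_{p+1}w_{p+1} + \cdots + v_nw_n$, $\mathcal{C}=\{v:b(v,v)=0\}$, and $H_{w,\alpha}=\{v: b(w,v)>\alpha\}$. *)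

From Stdlib Require Import Reals Lra Lia Arith.
Open Scope R_scope.

(* Points of R^k are represented by functions nat -> R supported in [0,k). *)
Definition pt := nat -> R.

Definition supp (k : nat) (x : pt) : Prop := forall i, (k <= i)%nat -> x i = 0.

Fixpoint rsum (k : nat) (f : nat -> R) : R :=
  match k with O => 0 | S k' => rsum k' f + f k' end.

Definition form (m k : nat) (x y : pt) : R :=
  rsum k (fun i => (if Nat.ltb i m then -1 else 1) * x i * y i).

Definition dist (k : nat) (x y : pt) : R :=
  sqrt (rsum k (fun i => (x i - y i) * (x i - y i))).

Definition vadd (x y : pt) : pt := fun i => x i + y i.
Definition vscal (t : R) (x : pt) : pt := fun i => t * x i.
Definition ebasis (j : nat) : pt := fun i => if Nat.eqb i j then 1 else 0.

Definition set_eq (A B : pt -> Prop) : Prop := forall x, A x <-> B x.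
Definition image (f : pt -> pt) (A : pt -> Prop) : pt -> Prop :=
  fun y => exists x, A x /\ y = f x.
Definition inter (A B : pt -> Prop) : pt -> Prop := fun x => A x /\ B x.

(* tilde Ein^{p,q}: isotropic vectors of Euclidean norm 1 in R^{p+1,q+1} *)
Definition Eint (p q : nat) (u : pt) : Prop :=
  supp (p + q + 2) u /\ form (p + 1) (p + q + 2) u u = 0 /\
  rsum (p + q + 2) (fun i => u i * u i) = 1.

(* iota: product of the antipodal maps of S^p x S^q, i.e. u |-> -u *)
Definition iota (u : pt) : pt := fun i => - u i.

Definition locally_const (k : nat) (S : pt -> Prop) (f : pt -> bool) : Prop :=
  forall x, S x -> exists eps, 0 < eps /\
    forall y, S y -> dist k x y < eps -> f y = f x.

Definition connected (k : nat) (S : pt -> Prop) : Prop :=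
  forall f : pt -> bool, locally_const k S f ->
    forall x y, S x -> S y -> f x = f y.

Definition component (k : nat) (X C : pt -> Prop) : Prop :=
  (forall x, C x -> X x) /\ (exists x, C x) /\ connected k C /\
  forall D : pt -> Prop, (forall x, D x -> X x) -> connected k D ->
    (exists x, D x /\ C x) -> forall x, D x -> C x.

(* Minkowski patch of tilde Ein^{p,q}: a connected component of
   pi^{-1}({[u] : B(v,u) <> 0}) = {u in tilde Ein : B(v,u) <> 0}, v isotropic *)
Definition mink_patch (p q : nat) (M : pt -> Prop) : Prop :=
  exists v, supp (p + q + 2) v /\ form (p + 1) (p + q + 2) v v = 0 /\
    component (p + q + 2)
      (fun u => Eint p q u /\ form (p + 1) (p + q + 2) v u <> 0) M.

Definition open_in (k : nat) (U : pt -> Prop) : Prop :=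
  forall x, U x -> supp k x /\ exists eps, 0 < eps /\
    forall y, supp k y -> dist k x y < eps -> U y.

Definition cont_on (k : nat) (U : pt -> Prop) (g : pt -> R) : Prop :=
  forall x, U x -> forall eps, 0 < eps -> exists delta, 0 < delta /\
    forall y, U y -> dist k x y < delta -> Rabs (g y - g x) < eps.

Fixpoint Ck (m k : nat) (U : pt -> Prop) (g : pt -> R) : Prop :=
  match m with
  | O => cont_on k U g
  | S m' => cont_on k U g /\
      forall i, (i < k)%nat -> exists dg : pt -> R,
        (forall x, U x ->
           derivable_pt_lim (fun t => g (vadd x (vscal t (ebasis i)))) 0 (dg x))
        /\ Ck m' k U dg
  end.

Definition smooth (k : nat) (U : pt -> Prop) (g : pt -> R) : Prop :=
  forall m, Ck m k U g.

Definition smooth_map (k l : nat) (U : pt -> Prop) (F : pt -> pt) : Prop :=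
  open_in k U /\ (forall x, U x -> supp l (F x)) /\
  forall j, (j < l)%nat -> smooth k U (fun x => F x j).

(* Stereographic projection: a conformal diffeomorphism s : M0 -> R^{p,q}.
   - s is a bijection of M0 onto R^n (n = p+q);
   - s is smooth on the embedded submanifold M0 (locally the restriction of a
     smooth map defined on an open set of R^{n+2});
   - its inverse phi : R^n -> M0 is smooth;
   - conformality: the pull-back by phi of the (conformal class of the)
     metric B restricted to tilde Ein is a positive multiple of b. *)
Definition is_stereo (p q : nat) (M0 : pt -> Prop) (s : pt -> pt) : Prop :=
  let n := (p + q)%nat in
  let N := (p + q + 2)%nat in
  (forall u, M0 u -> supp n (s u)) /\
  (forall u u', M0 u -> M0 u' -> s u = s u' -> u = u') /\
  (forall y, supp n y -> exists u, M0 u /\ s u = y) /\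
  (forall u, M0 u -> exists U : pt -> Prop, U u /\
      exists F, smooth_map N n U F /\ forall u', U u' -> M0 u' -> F u' = s u') /\
  exists phi : pt -> pt,
    (forall y, supp n y -> M0 (phi y) /\ s (phi y) = y) /\
    smooth_map n N (supp n) phi /\
    forall y, supp n y -> exists mu, 0 < mu /\
      forall xi eta a c : pt, supp n xi -> supp n eta ->
        (forall j, (j < N)%nat ->
           derivable_pt_lim (fun t => phi (vadd y (vscal t xi)) j) 0 (a j)) ->
        (forall j, (j < N)%nat ->
           derivable_pt_lim (fun t => phi (vadd y (vscal t eta)) j) 0 (c j)) ->
        form (p + 1) N a c = mu * form p n xi eta.

Definition in_cone (p q : nat) (w : pt) : Prop :=
  supp (p + q) w /\ form p (p + q) w w = 0.

Definition Hwa (p q : nat) (w : pt) (alpha : R) : pt -> Prop :=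
  fun v => supp (p + q) v /\ form p (p + q) w v > alpha.

From Stdlib Require Import Reals Lra Lia FunctionalExtensionality ClassicalEpsilon.
Open Scope R_scope.

(* Each Minkowski patch is a positive cone [{u : B(v, u) > 0}] of an isotropic vector [v]: a
   patch is a connected component of [B(v, .) <> 0] and each of the two sign regions is connected.
   If [s(M0 /\ M1)] is a half-space then [B(v0, v1) = 0]: otherwise [M0] contains a point of
   the line [R v1], and along a suitable coordinate line through its image the function
   [B(v1, s^-1 .)] vanishes to first order with positive second derivative (conformality of
   [s^-1] and isotropy of the curve), so it is positive on both sides while the half-space is
   convex.  Now if [-u] lies in [M0] but [u] in neither [M1] nor [M2], either [v2] is a negative
   multiple of [v1], and then [M1 = iota M2], or some [z] pairs positively with [v1] and [v2];
   perturbing [-u] by [z] and re-projecting along [v0] onto [Ein] gives a point of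
   [M0 /\ M1 /\ M2]. *)

Lemma rsum_ext k f g : (forall i, (i < k)%nat -> f i = g i) -> rsum k f = rsum k g.
Proof.
  induction k as [|k IH]; intros H; simpl; [reflexivity|].
  rewrite IH, (H k); auto; intros; apply H; lia.
Qed.

Lemma rsum_lin k a b f g :
  rsum k (fun i => a * f i + b * g i) = a * rsum k f + b * rsum k g.
Proof. induction k as [|k IH]; simpl; [ring | rewrite IH; ring]. Qed.

Lemma rsum_const0 k : rsum k (fun _ => 0) = 0.
Proof. induction k as [|k IH]; simpl; [|rewrite IH]; ring. Qed.

Lemma rsum_le k f g : (forall i, (i < k)%nat -> f i <= g i) -> rsum k f <= rsum k g.
Proof.
  induction k as [|k IH]; intros H; simpl; [lra|].
  assert (f k <= g k) by (apply H; lia).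
  assert (rsum k f <= rsum k g) by (apply IH; intros; apply H; lia).
  lra.
Qed.

Lemma rsum_nonneg k f : (forall i, (i < k)%nat -> 0 <= f i) -> 0 <= rsum k f.
Proof. intros H; rewrite <- (rsum_const0 k); apply rsum_le; auto. Qed.

Lemma rsum_ge_term k f j :
  (forall i, (i < k)%nat -> 0 <= f i) -> (j < k)%nat -> f j <= rsum k f.
Proof.
  induction k as [|k IH]; intros H Hj; simpl; [lia|].
  assert (0 <= rsum k f) by (apply rsum_nonneg; intros; apply H; lia).
  destruct (Nat.eq_dec j k) as [->|Hne]; [lra|].
  assert (f j <= rsum k f) by (apply IH; [intros; apply H|]; lia).
  assert (0 <= f k) by (apply H; lia).
  lra.
Qed.

Lemma rsum_eq0_nonneg k f :
  (forall i, (i < k)%nat -> 0 <= f i) -> rsum k f = 0 -> forall i, (i < k)%nat -> f i = 0.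
Proof.
  intros H H0 i Hi.
  assert (f i <= rsum k f) by (apply rsum_ge_term; auto).
  assert (0 <= f i) by auto.
  lra.
Qed.

Lemma rsum_abs k f : Rabs (rsum k f) <= rsum k (fun i => Rabs (f i)).
Proof.
  induction k as [|k IH]; simpl; [rewrite Rabs_R0; lra|].
  eapply Rle_trans; [apply Rabs_triang | lra].
Qed.

Lemma rsum_single k f j :
  (j < k)%nat -> (forall i, (i < k)%nat -> i <> j -> f i = 0) -> rsum k f = f j.
Proof.
  induction k as [|k IH]; intros Hj H; simpl; [lia|].
  destruct (Nat.eq_dec j k) as [->|Hne].
  - rewrite (rsum_ext _ _ (fun _ => 0)), rsum_const0; [ring|].
    intros; apply H; lia.
  - rewrite IH, (H k); try lia; [ring|]. intros; apply H; lia.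
Qed.

Lemma continuity_pt_rsum k (F : nat -> R -> R) t0 :
  (forall i, (i < k)%nat -> continuity_pt (F i) t0) ->
  continuity_pt (fun t => rsum k (fun i => F i t)) t0.
Proof.
  induction k as [|k IH]; intros H; simpl.
  - apply continuity_pt_const; intros ? ?; reflexivity.
  - apply continuity_pt_plus; [apply IH; intros|]; apply H; lia.
Qed.

Lemma derivable_pt_lim_rsum k (F : nat -> R -> R) dF t0 :
  (forall i, (i < k)%nat -> derivable_pt_lim (F i) t0 (dF i)) ->
  derivable_pt_lim (fun t => rsum k (fun i => F i t)) t0 (rsum k dF).
Proof.
  induction k as [|k IH]; intros H; simpl.
  - apply derivable_pt_lim_const.
  - apply derivable_pt_lim_plus; [apply IH; intros|]; apply H; lia.
Qed.

Definition sg (m i : nat) : R := if Nat.ltb i m then -1 else 1.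

Lemma sg_sq m i : sg m i * sg m i = 1.
Proof. unfold sg; destruct (Nat.ltb i m); ring. Qed.

Lemma Rabs_sg m i : Rabs (sg m i) = 1.
Proof. unfold sg; destruct (Nat.ltb i m); [rewrite Rabs_left by lra; ring | apply Rabs_R1]. Qed.

Lemma form_sg m k x y : form m k x y = rsum k (fun i => sg m i * x i * y i).
Proof. reflexivity. Qed.

Lemma form_ext m k x y x' y' :
  (forall i, (i < k)%nat -> x i = x' i) -> (forall i, (i < k)%nat -> y i = y' i) ->
  form m k x y = form m k x' y'.
Proof. intros Hx Hy; apply rsum_ext; intros; rewrite Hx, Hy; auto. Qed.

Lemma form_sym m k x y : form m k x y = form m k y x.
Proof. apply rsum_ext; intros; ring. Qed.

Lemma form_lin_r m k x a b y z :
  form m k x (fun i => a * y i + b * z i) = a * form m k x y + b * form m k x z.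
Proof. rewrite !form_sg, <- rsum_lin; apply rsum_ext; intros; ring. Qed.

Lemma form_scal_r m k x c y : form m k x (vscal c y) = c * form m k x y.
Proof.
  rewrite (form_ext m k x _ x (fun i => c * y i + 0 * y i)) by (intros; unfold vscal; ring).
  rewrite form_lin_r; ring.
Qed.

Lemma form_scal_l m k x c y : form m k (vscal c y) x = c * form m k y x.
Proof. rewrite form_sym, form_scal_r, form_sym; reflexivity. Qed.

Lemma form_add_r m k x y z : form m k x (vadd y z) = form m k x y + form m k x z.
Proof.
  rewrite (form_ext m k x _ x (fun i => 1 * y i + 1 * z i)) by (intros; unfold vadd; ring).
  rewrite form_lin_r; ring.
Qed.

Lemma form_add_l m k x y z : form m k (vadd y z) x = form m k y x + form m k z x.
Proof. rewrite form_sym, form_add_r, (form_sym _ _ x y), (form_sym _ _ x z); reflexivity. Qed.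

Lemma form_ebasis m k j : (j < k)%nat -> form m k (ebasis j) (ebasis j) = sg m j.
Proof.
  intros Hj; rewrite form_sg, (rsum_single k _ j Hj).
  - unfold ebasis; rewrite Nat.eqb_refl; ring.
  - intros i _ Hne; unfold ebasis; apply Nat.eqb_neq in Hne; rewrite Hne; ring.
Qed.

Definition edot (k : nat) (x y : pt) : R := rsum k (fun i => x i * y i).

Lemma edot_sym k x y : edot k x y = edot k y x.
Proof. apply rsum_ext; intros; ring. Qed.

Lemma edot_nonneg k x : 0 <= edot k x x.
Proof. apply rsum_nonneg; intros; apply Rle_0_sqr. Qed.

Lemma edot_scal k c x : edot k (vscal c x) (vscal c x) = c * c * edot k x x.
Proof.
  unfold edot; rewrite <- (Rplus_0_r (c * c * _)), <- (Rmult_0_l (rsum k (fun _ => 0))).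
  rewrite <- rsum_lin; apply rsum_ext; intros; unfold vscal; ring.
Qed.

Lemma edot_eq0 k x : edot k x x = 0 -> forall i, (i < k)%nat -> x i = 0.
Proof.
  intros H i Hi; apply Rsqr_0_uniq.
  apply (rsum_eq0_nonneg k (fun i => x i * x i)); auto; intros; apply Rle_0_sqr.
Qed.

Lemma edot_pos_of_form m k v x : form m k v x <> 0 -> 0 < edot k x x.
Proof.
  intros H; destruct (Rle_lt_or_eq_dec _ _ (edot_nonneg k x)) as [|E]; auto.
  exfalso; apply H; rewrite form_sg, <- (rsum_const0 k).
  apply rsum_ext; intros i Hi; rewrite (edot_eq0 k x (eq_sym E) i Hi); ring.
Qed.

Lemma supp_vadd k x y : supp k x -> supp k y -> supp k (vadd x y).
Proof. intros Hx Hy i Hi; unfold vadd; rewrite Hx, Hy by auto; ring. Qed.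

Lemma supp_vscal k c x : supp k x -> supp k (vscal c x).
Proof. intros Hx i Hi; unfold vscal; rewrite Hx by auto; ring. Qed.

Lemma Eint_scal p q c x :
  supp (p+q+2) x -> form (p+1) (p+q+2) x x = 0 -> c * c * edot (p+q+2) x x = 1 ->
  Eint p q (vscal c x).
Proof.
  intros Hs Hf Hn; split; [|split].
  - apply supp_vscal; auto.
  - rewrite form_scal_l, form_scal_r, Hf; ring.
  - exact (eq_trans (edot_scal _ c x) Hn).
Qed.

Definition normalize (k : nat) (x : pt) : pt := vscal (/ sqrt (edot k x x)) x.

Lemma Eint_normalize p q x :
  supp (p+q+2) x -> form (p+1) (p+q+2) x x = 0 -> 0 < edot (p+q+2) x x ->
  Eint p q (normalize (p+q+2) x).
Proof.
  intros Hs Hf Hp; apply Eint_scal; auto.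
  rewrite <- Rinv_mult, sqrt_sqrt by lra; field; lra.
Qed.

Lemma form_normalize_pos m k v x :
  0 < edot k x x -> 0 < form m k v x -> 0 < form m k v (normalize k x).
Proof.
  intros Hp Hv; unfold normalize; rewrite form_scal_r.
  apply Rmult_lt_0_compat; auto; apply Rinv_0_lt_compat, sqrt_lt_R0; auto.
Qed.

Lemma normalize_unit k x : edot k x x = 1 -> normalize k x = x.
Proof.
  intros H; unfold normalize; rewrite H, sqrt_1, Rinv_1.
  apply functional_extensionality; intros; unfold vscal; ring.
Qed.

(* Chosen so that [y + lam v] is isotropic when [v] is. *)
Definition lam m k (v y : pt) : R := - form m k y y / (2 * form m k v y).

Definition null_proj m k (v y : pt) : pt := vadd y (vscal (lam m k v y) v).

Lemma form_null_proj m k v y w :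
  form m k w (null_proj m k v y) = form m k w y + lam m k v y * form m k w v.
Proof. unfold null_proj; rewrite form_add_r, form_scal_r; reflexivity. Qed.

Lemma null_proj_isotropic m k v y :
  form m k v v = 0 -> form m k v y <> 0 ->
  form m k (null_proj m k v y) (null_proj m k v y) = 0.
Proof.
  intros Hvv Hvy; unfold null_proj at 1.
  rewrite form_add_l, form_scal_l, !form_null_proj, Hvv, (form_sym m k y v).
  unfold lam; field; auto.
Qed.

Lemma null_proj_id m k v y : form m k y y = 0 -> null_proj m k v y = y.
Proof.
  intros H; unfold null_proj, lam; rewrite H.
  apply functional_extensionality; intros; unfold vadd, vscal, Rdiv; ring.
Qed.

Definition to_Eint p q (v y : pt) : pt :=
  normalize (p+q+2) (null_proj (p+1) (p+q+2) v y).

Section ToEint.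
Variables (p q : nat) (v y : pt).
Local Notation m := (p+1)%nat.
Local Notation N := (p+q+2)%nat.
Hypothesis (Hsv : supp N v) (Hvv : form m N v v = 0) (Hvy : 0 < form m N v y).

Lemma form_to_Eint_pos w :
  form m N w v = 0 -> 0 < form m N w y -> 0 < form m N w (to_Eint p q v y).
Proof.
  intros Hwv Hwy.
  assert (Hw : 0 < form m N w (null_proj m N v y)) by (rewrite form_null_proj, Hwv; lra).
  apply form_normalize_pos; auto.
  apply (edot_pos_of_form m N v); rewrite form_null_proj, Hvv; lra.
Qed.

Lemma Eint_to_Eint : supp N y -> Eint p q (to_Eint p q v y).
Proof.
  intros Hsy; apply Eint_normalize.
  - apply supp_vadd; [|apply supp_vscal]; auto.
  - apply null_proj_isotropic; lra.
  - apply (edot_pos_of_form m N v); rewrite form_null_proj, Hvv; lra.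
Qed.

End ToEint.

Lemma to_Eint_id p q v y : Eint p q y -> to_Eint p q v y = y.
Proof.
  intros [_ [Hf Hn]]; unfold to_Eint; rewrite null_proj_id; auto; apply normalize_unit; auto.
Qed.

Lemma coord_le_dist k x y j : (j < k)%nat -> Rabs (x j - y j) <= dist k x y.
Proof.
  intros Hj; unfold dist; rewrite <- sqrt_Rsqr_abs; apply sqrt_le_1_alt.
  apply (rsum_ge_term k (fun i => (x i - y i) * (x i - y i))); auto.
  intros; apply Rle_0_sqr.
Qed.

Lemma dist_self k x : dist k x x = 0.
Proof.
  unfold dist; rewrite (rsum_ext _ _ (fun _ => 0)), rsum_const0; [apply sqrt_0|].
  intros; ring.
Qed.

Lemma dist_sym k x y : dist k x y = dist k y x.
Proof. unfold dist; f_equal; apply rsum_ext; intros; ring. Qed.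

Lemma form_lipschitz m k v x y :
  Rabs (form m k v x - form m k v y) <= rsum k (fun i => Rabs (v i)) * dist k x y.
Proof.
  assert (E : form m k v x - form m k v y = rsum k (fun i => sg m i * v i * (x i - y i))).
  { rewrite (rsum_ext k (fun i => sg m i * v i * (x i - y i))
      (fun i => 1 * (sg m i * v i * x i) + (-1) * (sg m i * v i * y i))) by (intros; ring).
    rewrite rsum_lin, !form_sg; ring. }
  rewrite E; eapply Rle_trans; [apply rsum_abs|].
  rewrite <- (Rplus_0_r (_ * _)), <- (Rmult_0_l (rsum k (fun _ => 0))), Rmult_comm, <- rsum_lin.
  apply rsum_le; intros i Hi.
  rewrite !Rabs_mult, Rabs_sg.
  assert (Rabs (x i - y i) <= dist k x y) by (apply coord_le_dist; auto).
  assert (0 <= Rabs (v i)) by apply Rabs_pos.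
  nra.
Qed.

Lemma pos_iff_of_close a b : Rabs (a - b) < Rabs b -> (0 < a <-> 0 < b).
Proof.
  intros H; apply Rabs_def2 in H.
  destruct (Rle_or_lt 0 b); [rewrite Rabs_right in H by lra | rewrite Rabs_left in H by lra]; lra.
Qed.

Definition form_pos_b m k (v u : pt) : bool := if Rlt_dec 0 (form m k v u) then true else false.

Lemma form_pos_b_locally_const m k v (S : pt -> Prop) :
  (forall u, S u -> form m k v u <> 0) -> locally_const k S (form_pos_b m k v).
Proof.
  intros Hnz z Sz.
  set (C := rsum k (fun i => Rabs (v i)) + 1).
  assert (HC : 0 < C) by (assert (0 <= rsum k (fun i => Rabs (v i))) by
    (apply rsum_nonneg; intros; apply Rabs_pos); unfold C; lra).
  assert (Hc : 0 < Rabs (form m k v z)) by (apply Rabs_pos_lt; auto).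
  exists (Rabs (form m k v z) / C); split; [apply Rdiv_lt_0_compat; auto|].
  intros w _ Hd.
  assert (Hclose : Rabs (form m k v w - form m k v z) < Rabs (form m k v z)).
  { eapply Rle_lt_trans; [apply form_lipschitz|].
    apply (Rmult_lt_compat_l C) in Hd; auto.
    replace (C * (Rabs (form m k v z) / C)) with (Rabs (form m k v z)) in Hd by (field; lra).
    assert (0 <= dist k z w) by apply sqrt_pos.
    rewrite dist_sym; unfold C in Hd; nra. }
  apply pos_iff_of_close in Hclose; unfold form_pos_b.
  destruct (Rlt_dec 0 (form m k v w)), (Rlt_dec 0 (form m k v z)); tauto.
Qed.

Lemma connected_form_pos m k v (S : pt -> Prop) :
  connected k S -> (forall u, S u -> form m k v u <> 0) ->
  forall x y, S x -> S y -> 0 < form m k v x -> 0 < form m k v y.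
Proof.
  intros Hc Hnz x y Sx Sy Px.
  assert (E := Hc _ (form_pos_b_locally_const m k v S Hnz) x y Sx Sy).
  unfold form_pos_b in E.
  destruct (Rlt_dec 0 (form m k v x)), (Rlt_dec 0 (form m k v y)); congruence.
Qed.

Definition curve_cont_at k (g : R -> pt) (t0 : R) : Prop :=
  forall j, (j < k)%nat -> continuity_pt (fun t => g t j) t0.

Lemma continuity_pt_form m k X Y t0 :
  curve_cont_at k X t0 -> curve_cont_at k Y t0 ->
  continuity_pt (fun t => form m k (X t) (Y t)) t0.
Proof.
  intros HX HY; apply (continuity_pt_rsum k (fun i t => sg m i * X t i * Y t i)).
  intros i Hi; repeat apply continuity_pt_mult; auto.
  apply continuity_pt_const; intros ? ?; reflexivity.
Qed.

Lemma continuity_pt_dist k (g : R -> pt) t0 :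
  curve_cont_at k g t0 -> continuity_pt (fun t => dist k (g t0) (g t)) t0.
Proof.
  intros Hg; apply (continuity_pt_comp _ sqrt); [|apply continuity_pt_sqrt, rsum_nonneg;
    intros; apply Rle_0_sqr].
  apply (continuity_pt_rsum k (fun j t => (g t0 j - g t j) * (g t0 j - g t j))).
  intros j Hj; apply continuity_pt_mult; apply continuity_pt_minus; auto;
    apply continuity_pt_const; intros ? ?; reflexivity.
Qed.

Lemma curve_cont_null_proj m k v Y t0 :
  curve_cont_at k Y t0 -> form m k v (Y t0) <> 0 ->
  curve_cont_at k (fun t => null_proj m k v (Y t)) t0.
Proof.
  intros HY Hv j Hj; unfold null_proj, vadd, vscal, lam.
  assert (Hconst : forall c, continuity_pt (fun _ => c) t0)
    by (intros c; apply continuity_pt_const; intros ? ?; reflexivity).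
  apply continuity_pt_plus; auto; apply continuity_pt_mult; auto.
  apply continuity_pt_div; [apply continuity_pt_opp, continuity_pt_form; auto| |lra].
  apply continuity_pt_mult; auto; apply continuity_pt_form; auto.
  intros i _; apply Hconst.
Qed.

Lemma curve_cont_normalize k Y t0 :
  curve_cont_at k Y t0 -> 0 < edot k (Y t0) (Y t0) ->
  curve_cont_at k (fun t => normalize k (Y t)) t0.
Proof.
  intros HY Hp j Hj; unfold normalize, vscal.
  apply continuity_pt_mult; auto.
  apply continuity_pt_inv; [|apply Rgt_not_eq, sqrt_lt_R0; auto].
  apply (continuity_pt_comp _ sqrt); [|apply continuity_pt_sqrt, edot_nonneg].
  apply (continuity_pt_rsum k (fun i t => Y t i * Y t i)).
  intros; apply continuity_pt_mult; auto.
Qed.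

Lemma connected_of_paths k (S : pt -> Prop) :
  (forall x y, S x -> S y -> exists (g : R -> pt) a b,
     a < b /\ g a = x /\ g b = y /\ (forall t, S (g t)) /\ (forall t0, curve_cont_at k g t0)) ->
  connected k S.
Proof.
  intros Hpath f Hlc x y Sx Sy.
  destruct (Hpath x y Sx Sy) as [g [a [b [Hab [Ha [Hb [HS Hg]]]]]]].
  set (h := fun t => if Bool.eqb (f (g t)) (f x) then 0 else 1).
  assert (Hh : continuity h).
  { intros t0; destruct (Hlc (g t0) (HS t0)) as [eps [He Hl]].
    destruct (continuity_pt_dist k g t0 (Hg t0) eps He) as [del [Hdel Hd]].
    exists del; split; auto; intros t [[_ Hne] Ht].
    assert (Hft : f (g t) = f (g t0)).
    { apply Hl; auto; specialize (Hd t (conj (conj I Hne) Ht)).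
      simpl in Hd; unfold R_dist in Hd; rewrite dist_self, Rminus_0_r in Hd.
      apply Rabs_def2 in Hd; lra. }
    simpl; unfold R_dist, h; rewrite Hft, Rminus_diag, Rabs_R0; auto. }
  destruct (Bool.bool_dec (f x) (f y)) as [|Hne]; auto; exfalso.
  assert (Hha : h a = 0) by (unfold h; rewrite Ha, Bool.eqb_reflx; auto).
  assert (Hhb : h b = 1).
  { unfold h; rewrite Hb; destruct (Bool.eqb (f y) (f x)) eqn:E; auto.
    apply Bool.eqb_prop in E; congruence. }
  destruct (IVT (fun t => h t - 1/2) a b) as [z [_ Hz]]; try lra.
  - apply continuity_minus; auto; apply continuity_const; intros ? ?; reflexivity.
  - unfold h in Hz; destruct Bool.eqb; lra.
Qed.

Definition segment (x y : pt) (t : R) : pt := vadd (vscal (1 - t) x) (vscal t y).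

Lemma form_segment m k w x y t :
  form m k w (segment x y t) = (1 - t) * form m k w x + t * form m k w y.
Proof. unfold segment; rewrite form_add_r, !form_scal_r; reflexivity. Qed.

Lemma curve_cont_segment k x y (tau : R -> R) t0 :
  continuity_pt tau t0 -> curve_cont_at k (fun t => segment x y (tau t)) t0.
Proof.
  intros Ht j _; unfold segment, vadd, vscal.
  assert (Hc : forall c, continuity_pt (fun _ => c) t0)
    by (intros c; apply continuity_pt_const; intros ? ?; reflexivity).
  apply continuity_pt_plus; apply continuity_pt_mult; auto.
  apply (continuity_pt_minus (fun _ => 1)); auto.
Qed.

Section PosCone.
Variables (p q : nat) (v : pt).
Local Notation m := (p+1)%nat.
Local Notation N := (p+q+2)%nat.
Hypothesis (Hsv : supp N v) (Hvv : form m N v v = 0).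

Definition pos_cone (u : pt) : Prop := Eint p q u /\ form m N v u > 0.

(* [(1 + sin t)/2] runs over [0,1] and, unlike a clamped parameter, is continuous on all of R,
   which is what [IVT] asks for. *)
Definition cone_path (x y : pt) (t : R) : pt := to_Eint p q v (segment x y ((1 + sin t) / 2)).

Lemma pos_cone_connected : connected N pos_cone.
Proof.
  apply connected_of_paths; intros x y [Ex Px] [Ey Py].
  assert (Hseg : forall t, 0 < form m N v (segment x y ((1 + sin t) / 2))).
  { intros t; rewrite form_segment; destruct (SIN_bound t); nra. }
  assert (Hend : forall t z,
            Eint p q z -> segment x y ((1 + sin t) / 2) = z -> cone_path x y t = z).
  { intros t z Ez E; unfold cone_path; rewrite E; apply to_Eint_id; auto. }
  exists (cone_path x y), (- (PI / 2)), (PI / 2); split; [|split; [|split; [|split]]].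
  - assert (H := PI_RGT_0); lra.
  - apply Hend; auto; rewrite sin_neg, sin_PI2.
    apply functional_extensionality; intros; unfold segment, vadd, vscal; field.
  - apply Hend; auto; rewrite sin_PI2.
    apply functional_extensionality; intros; unfold segment, vadd, vscal; field.
  - intros t; split.
    + apply Eint_to_Eint; auto; unfold segment.
      apply supp_vadd; apply supp_vscal; [apply Ex | apply Ey].
    + apply Rlt_gt, form_to_Eint_pos; auto.
  - intros t0; apply curve_cont_normalize.
    + apply curve_cont_null_proj; [|apply Rgt_not_eq, Hseg].
      apply curve_cont_segment.
      apply continuity_pt_div; [| |lra]; [apply continuity_pt_plus|];
        try apply continuity_sin; apply continuity_pt_const; intros ? ?; reflexivity.
    + apply (edot_pos_of_form m N v); rewrite form_null_proj, Hvv.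
      specialize (Hseg t0); lra.
Qed.

Lemma component_pos_cone (X M : pt -> Prop) x0 :
  (forall u, X u <-> Eint p q u /\ form m N v u <> 0) -> component N X M ->
  M x0 -> 0 < form m N v x0 -> forall u, M u <-> pos_cone u.
Proof.
  intros HX [Hsub [_ [Hcon Hmax]]] Mx0 Px0 u; split.
  - intros Mu; destruct (proj1 (HX u) (Hsub u Mu)) as [Eu _]; split; auto.
    apply Rlt_gt, (connected_form_pos m N v M Hcon) with x0; auto.
    intros z Mz; apply (HX z), Hsub; auto.
  - intros Pu; apply (Hmax pos_cone); auto.
    + intros z [Ez Pz]; apply HX; split; auto; lra.
    + apply pos_cone_connected.
    + exists x0; repeat split; auto; apply HX, Hsub; auto.
Qed.

End PosCone.

Lemma pos_cone_edot_pos p q v x : pos_cone p q v x -> 0 < edot (p+q+2) v v.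
Proof. intros [_ H]; apply (edot_pos_of_form (p+1) _ x); rewrite form_sym; lra. Qed.

Lemma mink_patch_pos_cone p q M :
  mink_patch p q M -> exists v, supp (p+q+2) v /\ form (p+1) (p+q+2) v v = 0 /\
    0 < edot (p+q+2) v v /\ forall u, M u <-> pos_cone p q v u.
Proof.
  intros [v [Sv [Nv Hc]]].
  pose proof Hc as [Hsub [[x0 Mx0] _]].
  destruct (Hsub x0 Mx0) as [_ Hx0].
  set (c := if Rlt_dec 0 (form (p+1) (p+q+2) v x0) then 1 else -1).
  assert (Hc2 : c * c = 1) by (unfold c; destruct Rlt_dec; ring).
  assert (Hcx : 0 < c * form (p+1) (p+q+2) v x0) by (unfold c; destruct Rlt_dec; lra).
  assert (Sw : supp (p+q+2) (vscal c v)) by (apply supp_vscal; auto).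
  assert (Nw : form (p+1) (p+q+2) (vscal c v) (vscal c v) = 0)
    by (rewrite form_scal_l, form_scal_r, Nv; ring).
  assert (Hw : forall u, M u <-> pos_cone p q (vscal c v) u).
  { eapply component_pos_cone; eauto; [|rewrite form_scal_l; auto].
    intros u; rewrite form_scal_l; split; intros [E H]; split; auto.
    - intros H0; apply H; apply (Rmult_eq_reg_l c); nra.
    - intros H0; apply H; rewrite H0; ring. }
  exists (vscal c v); split; [|split; [|split]]; auto.
  apply (pos_cone_edot_pos p q _ x0), Hw; auto.
Qed.

Definition curve_deriv_at k (g : R -> pt) (t : R) (dg : pt) : Prop :=
  forall j, (j < k)%nat -> derivable_pt_lim (fun s => g s j) t (dg j).

Lemma derivable_pt_lim_form m k X Y dX dY t0 :
  curve_deriv_at k X t0 dX -> curve_deriv_at k Y t0 dY ->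
  derivable_pt_lim (fun t => form m k (X t) (Y t)) t0 (form m k dX (Y t0) + form m k (X t0) dY).
Proof.
  intros HX HY.
  set (dF := fun i => (0 * X t0 i + sg m i * dX i) * Y t0 i + sg m i * X t0 i * dY i).
  replace (form m k dX (Y t0) + form m k (X t0) dY) with (rsum k dF).
  - apply (derivable_pt_lim_rsum k (fun i t => sg m i * X t i * Y t i)); intros i Hi.
    apply (derivable_pt_lim_mult (fun t => sg m i * X t i) (fun t => Y t i)); auto.
    apply (derivable_pt_lim_mult (fun _ => sg m i) (fun t => X t i)); auto.
    apply derivable_pt_lim_const.
  - rewrite (rsum_ext k dF (fun i => 1 * (sg m i * dX i * Y t0 i) + 1 * (sg m i * X t0 i * dY i)))
      by (intros; unfold dF; ring).
    rewrite rsum_lin, !form_sg; ring.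
Qed.

Lemma derivable_pt_lim_form_const m k v X dX t0 :
  curve_deriv_at k X t0 dX -> derivable_pt_lim (fun t => form m k v (X t)) t0 (form m k v dX).
Proof.
  intros HX.
  replace (form m k v dX) with (form m k (fun _ => 0) (X t0) + form m k v dX)
    by (rewrite form_sg, (rsum_ext _ _ (fun _ => 0)), rsum_const0 by (intros; ring); ring).
  apply (derivable_pt_lim_form m k (fun _ => v)); auto.
  intros j _; apply derivable_pt_lim_const.
Qed.

Section IsotropicCurve.
Variables (m k : nat) (F D1 : R -> pt) (D2 : pt).
Hypothesis (Hnull : forall t, form m k (F t) (F t) = 0).
Hypothesis (HD1 : forall t, curve_deriv_at k F t (D1 t)) (HD2 : curve_deriv_at k D1 0 D2).

Lemma isotropic_curve_orth t : form m k (F t) (D1 t) = 0.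
Proof.
  assert (H := derivable_pt_lim_form m k F F _ _ t (HD1 t) (HD1 t)).
  rewrite (functional_extensionality _ (fun _ => 0) Hnull) in H.
  assert (H0 := uniqueness_limite _ _ _ _ H (derivable_pt_lim_const 0 t)).
  rewrite (form_sym m k (D1 t)) in H0; lra.
Qed.

Lemma isotropic_curve_second : form m k (D1 0) (D1 0) + form m k (F 0) D2 = 0.
Proof.
  assert (H := derivable_pt_lim_form m k F D1 _ _ 0 (HD1 0) HD2).
  rewrite (functional_extensionality _ (fun _ => 0) isotropic_curve_orth) in H.
  symmetry; apply (uniqueness_limite _ _ _ _ (derivable_pt_lim_const 0 0) H).
Qed.

End IsotropicCurve.

Lemma pos_near_of_second_deriv_pos (f f' : R -> R) f'' :
  (forall t, derivable_pt_lim f t (f' t)) -> derivable_pt_lim f' 0 f'' ->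
  f 0 = 0 -> f' 0 = 0 -> 0 < f'' -> exists d, 0 < d /\ 0 < f d /\ 0 < f (- d).
Proof.
  intros Hf Hf' E0 E1 Hpos.
  destruct (Hf' (f'' / 2) ltac:(lra)) as [del Hd].
  assert (Hsign : forall c, c <> 0 -> Rabs c < del -> 0 < f' c * c).
  { intros c Hc Hcd; specialize (Hd c Hc Hcd).
    rewrite Rplus_0_l, E1, Rminus_0_r in Hd; apply Rabs_def2 in Hd.
    replace (f' c * c) with (f' c / c * (c * c)) by (field; auto).
    apply Rmult_lt_0_compat; [lra | apply Rsqr_pos_lt; auto]. }
  assert (Hdel := cond_pos del).
  exists (del / 2); split; [lra|split].
  - destruct (MVT_cor2 f f' 0 (del / 2) ltac:(lra) (fun c _ => Hf c)) as [c [Hc Hc']].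
    assert (0 < f' c * c) by (apply Hsign; [|rewrite Rabs_right]; lra).
    rewrite E0 in Hc; nra.
  - destruct (MVT_cor2 f f' (- (del / 2)) 0 ltac:(lra) (fun c _ => Hf c)) as [c [Hc Hc']].
    assert (0 < f' c * c) by (apply Hsign; [|rewrite Rabs_left]; lra).
    rewrite E0 in Hc; nra.
Qed.

Lemma derivable_pt_lim_line_shift (g : pt -> R) y e t d :
  derivable_pt_lim (fun s => g (vadd (vadd y (vscal t e)) (vscal s e))) 0 d ->
  derivable_pt_lim (fun s => g (vadd y (vscal s e))) t d.
Proof.
  intros H eps He; destruct (H eps He) as [del Hd]; exists del; intros h Hh Hhd.
  specialize (Hd h Hh Hhd).
  replace (vadd y (vscal (t + h) e)) with (vadd (vadd y (vscal t e)) (vscal (0 + h) e))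
    by (apply functional_extensionality; intros; unfold vadd, vscal; ring).
  replace (vadd y (vscal t e)) with (vadd (vadd y (vscal t e)) (vscal 0 e)) at 2
    by (apply functional_extensionality; intros; unfold vadd, vscal; ring).
  exact Hd.
Qed.

Lemma smooth_map_directional_derivs n N (phi : pt -> pt) j :
  smooth_map n N (supp n) phi -> (j < n)%nat ->
  exists D : nat -> (pt -> R) * (pt -> R), forall k, (k < N)%nat ->
    (forall x, supp n x ->
       derivable_pt_lim (fun t => phi (vadd x (vscal t (ebasis j))) k) 0 (fst (D k) x)) /\
    (forall x, supp n x ->
       derivable_pt_lim (fun t => fst (D k) (vadd x (vscal t (ebasis j)))) 0 (snd (D k) x)).
Proof.
  intros [_ [_ Hsmooth]] Hj.
  apply (choice (fun k (D : (pt -> R) * (pt -> R)) => (k < N)%nat ->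
    (forall x, supp n x ->
       derivable_pt_lim (fun t => phi (vadd x (vscal t (ebasis j))) k) 0 (fst D x)) /\
    (forall x, supp n x ->
       derivable_pt_lim (fun t => fst D (vadd x (vscal t (ebasis j)))) 0 (snd D x)))).
  intros k.
  destruct (Nat.lt_ge_cases k N) as [Hk|Hk].
  - destruct (Hsmooth k Hk 2%nat) as [_ H1].
    destruct (H1 j Hj) as [dg [Hdg [_ H2]]]; destruct (H2 j Hj) as [d2 [Hd2 _]].
    exists (dg, d2); auto.
  - exists (fun _ => 0, fun _ => 0); intros; lia.
Qed.

Lemma stereo_line_jet p q M0 s y j :
  is_stereo p q M0 s -> supp (p+q) y -> (j < p+q)%nat ->
  exists (F D1 : R -> pt) (D2 : pt) (mu : R), 0 < mu /\
    (forall t, M0 (F t) /\ s (F t) = vadd y (vscal t (ebasis j))) /\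
    (forall t, curve_deriv_at (p+q+2) F t (D1 t)) /\ curve_deriv_at (p+q+2) D1 0 D2 /\
    form (p+1) (p+q+2) (D1 0) (D1 0) = mu * sg p j.
Proof.
  intros Hst Hy Hj; cbv zeta in Hst.
  destruct Hst as [_ [_ [_ [_ [phi [Hphi [Hsm Hconf]]]]]]].
  set (e := ebasis j); set (L := fun t => vadd y (vscal t e)).
  assert (Se : supp (p+q) e)
    by (intros i Hi; unfold e, ebasis; replace (Nat.eqb i j) with false by
          (symmetry; apply Nat.eqb_neq; lia); reflexivity).
  assert (SL : forall t, supp (p+q) (L t)) by (intros t; apply supp_vadd, supp_vscal; auto).
  destruct (smooth_map_directional_derivs _ _ phi j Hsm Hj) as [D HD].
  assert (HF : forall t, curve_deriv_at (p+q+2) (fun t => phi (L t)) t (fun k => fst (D k) (L t))).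
  { intros t k Hk; apply (derivable_pt_lim_line_shift (fun x => phi x k)), HD; auto. }
  destruct (Hconf y Hy) as [mu [Hmu Hc]].
  exists (fun t => phi (L t)), (fun t k => fst (D k) (L t)), (fun k => snd (D k) y), mu.
  split; [|split; [|split; [|split]]]; auto.
  - intros t; apply Hphi, SL.
  - intros k Hk; apply HD; auto.
  - rewrite <- (form_ebasis p (p+q) j Hj); apply Hc; auto; apply HF.
Qed.

Lemma Hwa_midpoint p q w alpha y e d :
  supp (p+q) y -> Hwa p q w alpha (vadd y (vscal d e)) ->
  Hwa p q w alpha (vadd y (vscal (- d) e)) ->
  Hwa p q w alpha y.
Proof.
  intros Hy [_ H1] [_ H2]; split; auto.
  rewrite !form_add_r, !form_scal_r in *; lra.
Qed.

Lemma exists_mul_sg_neg p n c :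
  (1 <= p)%nat -> (p < n)%nat -> c <> 0 -> exists j, (j < n)%nat /\ c * sg p j < 0.
Proof.
  intros Hp Hn Hc; unfold sg; destruct (Rlt_or_le 0 c).
  - exists 0%nat; split; [lia|].
    replace (Nat.ltb 0 p) with true by (symmetry; apply Nat.ltb_lt; lia); lra.
  - exists p; split; [lia|]; rewrite Nat.ltb_irrefl; lra.
Qed.

Lemma pos_cone_on_line p q v0 v1 :
  supp (p+q+2) v1 -> form (p+1) (p+q+2) v1 v1 = 0 -> 0 < edot (p+q+2) v1 v1 ->
  form (p+1) (p+q+2) v0 v1 <> 0 -> exists lm, lm <> 0 /\ pos_cone p q v0 (vscal lm v1).
Proof.
  intros Hs Hn He Hv.
  set (sig := if Rlt_dec 0 (form (p+1) (p+q+2) v0 v1) then 1 else -1).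
  assert (Hsig : 0 < sig * form (p+1) (p+q+2) v0 v1) by (unfold sig; destruct Rlt_dec; lra).
  assert (Hsq : 0 < sqrt (edot (p+q+2) v1 v1)) by (apply sqrt_lt_R0; auto).
  exists (sig / sqrt (edot (p+q+2) v1 v1)); split; [|split].
  - unfold sig, Rdiv; destruct Rlt_dec; apply Rmult_integral_contrapositive_currified; try lra;
      apply Rinv_neq_0_compat; lra.
  - apply Eint_scal; auto.
    replace (sig / sqrt _ * (sig / sqrt _)) with ((sig * sig) / (sqrt (edot (p+q+2) v1 v1))²)
      by (unfold Rsqr; field; lra).
    rewrite Rsqr_sqrt by lra; unfold sig; destruct Rlt_dec; field; lra.
  - rewrite form_scal_r; unfold Rdiv; rewrite Rmult_assoc, (Rmult_comm (/ _)), <- Rmult_assoc.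
    apply Rmult_lt_0_compat; auto; apply Rinv_0_lt_compat; auto.
Qed.

(* Along the coordinate line through [s (lm v)] in a direction [e_j] with [lm * sg p j < 0],
   the function [B(v, .)] vanishes to first order and has second derivative [- mu sg p j / lm > 0],
   by conformality of [s^-1] and isotropy of the curve; hence it is positive on both sides. *)
Lemma stereo_line_pos_both_sides p q M0 s v lm :
  (1 <= p)%nat -> (1 <= q)%nat -> (forall u, M0 u -> Eint p q u) -> is_stereo p q M0 s ->
  lm <> 0 -> M0 (vscal lm v) ->
  exists e d, 0 < d /\ forall t, t = d \/ t = - d ->
    exists u, M0 u /\ 0 < form (p+1) (p+q+2) v u /\ s u = vadd (s (vscal lm v)) (vscal t e).
Proof.
  intros Hp Hq HE Hst Hlm Hp1; set (p1 := vscal lm v) in *.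
  pose proof Hst as [Hs [Hinj _]].
  destruct (exists_mul_sg_neg p (p+q) lm) as [j [Hj Hsg]]; try lia; auto.
  destruct (stereo_line_jet p q M0 s (s p1) j Hst (Hs p1 Hp1) Hj)
    as [F [D1 [D2 [mu [Hmu [HF [HD1 [HD2 Hmuj]]]]]]]].
  assert (F0 : F 0 = p1).
  { apply Hinj; [apply HF | auto |]; rewrite (proj2 (HF 0)).
    apply functional_extensionality; intros; unfold vadd, vscal; ring. }
  assert (Hnull : forall t, form (p+1) (p+q+2) (F t) (F t) = 0) by (intros; apply HE, HF).
  assert (Hort := isotropic_curve_orth _ _ F D1 Hnull HD1 0).
  assert (Hsec := isotropic_curve_second _ _ F D1 D2 Hnull HD1 HD2).
  assert (Hvv : form (p+1) (p+q+2) v v = 0).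
  { specialize (Hnull 0); rewrite F0 in Hnull; unfold p1 in Hnull.
    rewrite form_scal_l, form_scal_r in Hnull.
    apply (Rmult_eq_reg_l (lm * lm)); [lra|]; apply Rmult_integral_contrapositive_currified; auto. }
  rewrite F0 in Hort, Hsec; unfold p1 in Hort, Hsec; rewrite form_scal_l in Hort, Hsec.
  destruct (pos_near_of_second_deriv_pos (fun t => form (p+1) (p+q+2) v (F t))
              (fun t => form (p+1) (p+q+2) v (D1 t)) (form (p+1) (p+q+2) v D2))
    as [d [Hd [Hplus Hminus]]].
  - intros t; apply derivable_pt_lim_form_const, HD1.
  - apply derivable_pt_lim_form_const, HD2.
  - rewrite F0; unfold p1; rewrite form_scal_r, Hvv; ring.
  - apply (Rmult_eq_reg_l lm); lra.
  - assert (0 < lm * lm) by (apply Rsqr_pos_lt; auto); nra.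
  - exists (ebasis j), d; split; auto.
    intros t [-> | ->]; [exists (F d) | exists (F (- d))]; repeat split; auto; apply HF.
Qed.

(* Convexity of the half-space [H_{w,alpha}] forbids [B(v1, .)] from being positive on both
   sides of the image of the point of [M0] on the line [R v1] while vanishing at it. *)
Lemma halfspace_patches_orthogonal p q M0 M1 s v0 v1 w alpha :
  (1 <= p)%nat -> (1 <= q)%nat -> (forall u, M0 u <-> pos_cone p q v0 u) ->
  supp (p+q+2) v1 -> form (p+1) (p+q+2) v1 v1 = 0 -> 0 < edot (p+q+2) v1 v1 ->
  (forall u, M1 u <-> pos_cone p q v1 u) ->
  is_stereo p q M0 s -> set_eq (image s (inter M0 M1)) (Hwa p q w alpha) ->
  form (p+1) (p+q+2) v0 v1 = 0.
Proof.
  intros Hp Hq C0 Sv1 Nv1 He C1 Hst Himg.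
  destruct (Req_dec (form (p+1) (p+q+2) v0 v1) 0) as [|Hne]; auto; exfalso.
  destruct (pos_cone_on_line p q v0 v1 Sv1 Nv1 He Hne) as [lm [Hlm Hp1]].
  apply C0 in Hp1; set (p1 := vscal lm v1) in *.
  assert (HE : forall u, M0 u -> Eint p q u) by (intros u Hu; apply C0, Hu).
  destruct (stereo_line_pos_both_sides p q M0 s v1 lm Hp Hq HE Hst Hlm Hp1) as [e [d [Hd Hpos]]].
  assert (Hline : forall t, t = d \/ t = - d -> Hwa p q w alpha (vadd (s p1) (vscal t e))).
  { intros t Ht; destruct (Hpos t Ht) as [u [M0u [Pu Eu]]].
    apply Himg; exists u; repeat split; auto; apply C1; split; auto; lra. }
  pose proof Hst as [Hs [Hinj _]].
  destruct (proj2 (Himg (s p1)) (Hwa_midpoint p q w alpha (s p1) e d (Hs p1 Hp1)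
              (Hline d (or_introl eq_refl)) (Hline (- d) (or_intror eq_refl))))
    as [u [[M0u M1u] Eu]].
  rewrite (Hinj u p1 M0u Hp1 (eq_sym Eu)) in M1u.
  destruct (proj1 (C1 p1) M1u) as [_ Hv1p1].
  unfold p1 in Hv1p1; rewrite form_scal_r, Nv1 in Hv1p1; lra.
Qed.

(* The second alternative is the equality case of Cauchy-Schwarz. *)
Lemma edot_common_pos_or_opposite k v1 v2 :
  0 < edot k v1 v1 -> 0 < edot k v2 v2 ->
  (exists a b, 0 < edot k v1 (fun i => a * v1 i + b * v2 i) /\
               0 < edot k v2 (fun i => a * v1 i + b * v2 i))
  \/ (exists c, c < 0 /\ forall i, (i < k)%nat -> v2 i = c * v1 i).
Proof.
  intros HA HC.
  assert (Hlin : forall x a b,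
            edot k x (fun i => a * v1 i + b * v2 i) = a * edot k x v1 + b * edot k x v2)
    by (intros; unfold edot; rewrite <- rsum_lin; apply rsum_ext; intros; ring).
  set (A := edot k v1 v1) in *; set (C := edot k v2 v2) in *; set (g := edot k v1 v2).
  assert (Hg : edot k v2 v1 = g) by apply edot_sym.
  destruct (Rle_lt_dec 0 g) as [Hg0|Hg0].
  { left; exists 1, 1; rewrite !Hlin; fold A C g; rewrite Hg; split; nra. }
  destruct (Rlt_dec 0 (A * C - g * g)) as [Hcs|Hcs].
  { left; exists (C - g), (A - g); rewrite !Hlin; fold A C g; rewrite Hg; split; nra. }
  right; exists (g / A); split; [apply Rdiv_neg_pos; auto|].
  set (r := fun i => v2 i - g / A * v1 i).
  assert (Er : edot k r r = C - g * g / A).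
  { unfold edot, r; rewrite (rsum_ext _ _ (fun i => 1 * (v2 i * v2 i) +
      1 * ((-2 * (g / A)) * (v1 i * v2 i) + (g / A * (g / A)) * (v1 i * v1 i)))) by (intros; ring).
    rewrite !rsum_lin; fold (edot k v2 v2) (edot k v1 v2) (edot k v1 v1) A C g; field; lra. }
  assert (Er0 : edot k r r = 0).
  { apply Rle_antisym; [|apply edot_nonneg]; rewrite Er.
    replace (C - g * g / A) with (- ((g * g - A * C) / A)) by (field; lra).
    assert (0 <= (g * g - A * C) / A)
      by (apply Rmult_le_pos; [|apply Rlt_le, Rinv_0_lt_compat]; lra); lra. }
  intros i Hi; assert (H := edot_eq0 k r Er0 i Hi); unfold r in H; lra.
Qed.

Definition flip (m : nat) (z : pt) : pt := fun i => sg m i * z i.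

Lemma form_flip m k x z : form m k x (flip m z) = edot k x z.
Proof.
  rewrite form_sg; apply rsum_ext; intros i _; unfold flip.
  replace (sg m i * x i * (sg m i * z i)) with ((sg m i * sg m i) * (x i * z i)) by ring.
  rewrite sg_sq; ring.
Qed.

Lemma exists_small_pos a b : 0 < a -> exists d, 0 < d /\ 0 < a + d * b.
Proof.
  intros Ha; assert (Hb := Rabs_pos b); exists (a / (Rabs b + 1)); split.
  - apply Rdiv_lt_0_compat; lra.
  - assert (- Rabs b <= b) by (unfold Rabs; destruct Rcase_abs; lra).
    assert (a / (Rabs b + 1) * b >= - (a / (Rabs b + 1) * Rabs b))
      by (assert (0 < a / (Rabs b + 1)) by (apply Rdiv_lt_0_compat; lra); nra).
    replace (a / (Rabs b + 1) * Rabs b) with (a - a / (Rabs b + 1)) in * by (field; lra).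
    assert (0 < a / (Rabs b + 1)) by (apply Rdiv_lt_0_compat; lra); lra.
Qed.

Section ThreeCones.
Variables (p q : nat) (v0 v1 v2 : pt).
Local Notation m := (p+1)%nat.
Local Notation N := (p+q+2)%nat.

Lemma pos_cones_meet x z :
  supp N v0 -> form m N v0 v0 = 0 -> form m N v1 v0 = 0 -> form m N v2 v0 = 0 ->
  pos_cone p q v0 x -> 0 <= form m N v1 x -> 0 <= form m N v2 x ->
  supp N z -> 0 < form m N v1 z -> 0 < form m N v2 z ->
  exists u, pos_cone p q v0 u /\ pos_cone p q v1 u /\ pos_cone p q v2 u.
Proof.
  intros Sv0 N0 O1 O2 [[Sx _] Px] P1x P2x Sz P1z P2z.
  destruct (exists_small_pos _ (form m N v0 z) Px) as [d [Hd Hpos]].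
  set (y := vadd x (vscal d z)).
  assert (Hy : forall w, form m N w y = form m N w x + d * form m N w z)
    by (intros; unfold y; rewrite form_add_r, form_scal_r; reflexivity).
  assert (Py : 0 < form m N v0 y) by (rewrite Hy; lra).
  assert (Sy : supp N y) by (apply supp_vadd, supp_vscal; auto).
  exists (to_Eint p q v0 y).
  split; [|split]; (split; [apply Eint_to_Eint; auto | apply Rlt_gt, form_to_Eint_pos; auto]);
    rewrite Hy; nra.
Qed.

Lemma flip_common_pos :
  supp N v1 -> supp N v2 -> 0 < edot N v1 v1 -> 0 < edot N v2 v2 ->
  (exists z, supp N z /\ 0 < form m N v1 z /\ 0 < form m N v2 z)
  \/ (exists c, c < 0 /\ forall i, (i < N)%nat -> v2 i = c * v1 i).
Proof.
  intros S1 S2 H1 H2; destruct (edot_common_pos_or_opposite N v1 v2 H1 H2) as [[a [b Hab]]|]; auto.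
  left; exists (flip m (fun i => a * v1 i + b * v2 i)); rewrite !form_flip; split; auto.
  intros i Hi; unfold flip; rewrite S1, S2 by auto; ring.
Qed.

End ThreeCones.

Lemma form_iota m k v x : form m k v (iota x) = - form m k v x.
Proof.
  rewrite (form_ext m k v _ v (vscal (-1) x)) by (intros; unfold iota, vscal; ring).
  rewrite form_scal_r; ring.
Qed.

Lemma Eint_iota p q x : Eint p q x -> Eint p q (iota x).
Proof.
  intros [S [Nf U]]; split; [|split].
  - intros i Hi; unfold iota; rewrite S by auto; ring.
  - rewrite form_iota, form_sym, form_iota, Nf; ring.
  - rewrite <- U; apply rsum_ext; intros; unfold iota; ring.
Qed.

Lemma iota_involutive x : iota (iota x) = x.
Proof. apply functional_extensionality; intros; unfold iota; ring. Qed.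

Lemma pos_cone_opposite p q v1 v2 c (M1 M2 : pt -> Prop) :
  c < 0 -> (forall i, (i < p+q+2)%nat -> v2 i = c * v1 i) ->
  (forall u, M1 u <-> pos_cone p q v1 u) -> (forall u, M2 u <-> pos_cone p q v2 u) ->
  set_eq M1 (image iota M2).
Proof.
  intros Hc Hv C1 C2.
  assert (F21 : forall x, form (p+1) (p+q+2) v2 x = c * form (p+1) (p+q+2) v1 x)
    by (intros; rewrite <- form_scal_l; apply form_ext; auto).
  intros y; split.
  - intros M1y; exists (iota y); rewrite iota_involutive; split; auto.
    destruct (proj1 (C1 y) M1y) as [Ey Py].
    apply C2; split; [apply Eint_iota; auto|]; rewrite F21, form_iota; nra.
  - intros [x [M2x ->]]; destruct (proj1 (C2 x) M2x) as [Ex Px].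
    apply C1; split; [apply Eint_iota; auto|]; rewrite F21 in Px; rewrite form_iota; nra.
Qed.

Theorem fact5p4 (p q : nat) (hp : (2 <= p)%nat) (hq : (2 <= q)%nat)
  (M0 M1 M2 : pt -> Prop) (s : pt -> pt) :
  mink_patch p q M0 -> mink_patch p q M1 -> mink_patch p q M2 ->
  ~ set_eq M1 (image iota M2) ->
  is_stereo p q M0 s ->
  (exists w alpha, in_cone p q w /\ (exists i, (i < p + q)%nat /\ w i <> 0) /\
     set_eq (image s (inter M0 M1)) (Hwa p q w alpha)) ->
  (exists w alpha, in_cone p q w /\ (exists i, (i < p + q)%nat /\ w i <> 0) /\
     set_eq (image s (inter M0 M2)) (Hwa p q w alpha)) ->
  (forall u, ~ (M0 u /\ M1 u /\ M2 u)) ->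
  forall u, image iota M0 u -> M1 u \/ M2 u.
Proof.
  intros Hm0 Hm1 Hm2 Hne Hst [w1 [a1 [_ [_ H1]]]] [w2 [a2 [_ [_ H2]]]] Hdisj u [x [M0x ->]].
  destruct (mink_patch_pos_cone p q M0 Hm0) as [v0 [Sv0 [Nv0 [_ C0]]]].
  destruct (mink_patch_pos_cone p q M1 Hm1) as [v1 [Sv1 [Nv1 [E1 C1]]]].
  destruct (mink_patch_pos_cone p q M2 Hm2) as [v2 [Sv2 [Nv2 [E2 C2]]]].
  assert (O1 := halfspace_patches_orthogonal p q M0 M1 s v0 v1 w1 a1 ltac:(lia) ltac:(lia)
                  C0 Sv1 Nv1 E1 C1 Hst H1).
  assert (O2 := halfspace_patches_orthogonal p q M0 M2 s v0 v2 w2 a2 ltac:(lia) ltac:(lia)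
                  C0 Sv2 Nv2 E2 C2 Hst H2).
  rewrite form_sym in O1, O2.
  apply C0 in M0x; rewrite C1, C2; unfold pos_cone; rewrite !form_iota.
  destruct (Rlt_dec 0 (- form (p+1) (p+q+2) v1 x)) as [|N1];
    [left; split; [apply Eint_iota, M0x|lra]|].
  destruct (Rlt_dec 0 (- form (p+1) (p+q+2) v2 x)) as [|N2];
    [right; split; [apply Eint_iota, M0x|lra]|].
  exfalso; destruct (flip_common_pos p q v1 v2 Sv1 Sv2 E1 E2) as [[z [Sz [P1 P2]]] | [c [Hc Hv]]].
  - destruct (pos_cones_meet p q v0 v1 v2 x z Sv0 Nv0 O1 O2 M0x ltac:(lra) ltac:(lra) Sz P1 P2)
      as [y [P0y [P1y P2y]]].
    apply (Hdisj y); rewrite C0, C1, C2; auto.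
  - exact (Hne (pos_cone_opposite p q v1 v2 c M1 M2 Hc Hv C1 C2)).
Qed.
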